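(* $$\lim_{k \to \infty} \sum_{n=0}^{\infty} \frac{1}{n!}\left\langle {n \atop k} \right\rangle = 2,$$ where the limit is over nonnegative integers $k$.
   Context: For integers $n,k\ge 0$, the Eulerian number $\left\langle {n \atop k} \right\rangle$ is the number of permutations of $\{1,\ldots,n\}$ with exactly $k$ ascents (positions $i$ with $\sigma(i)<\sigma(i+1)$), with $\left\langle {0 \atop 0} \right\rangle=1$ and $\left\langle {0 \atop k} \right\rangle=0$ for $k\ge1$; in particular $\left\langle {n \atop k} \right\rangle=0$ when $n<k$. Equivalently they satisfy $\left\langle {n \atop k} \right\rangle = (k+1)\left\langle {n-1 \atop k} \right\rangle + (n-k)\left\langle {n-1 \atop k-1} \right\rangle$. *)

From Stdlib Require Import Reals Arith.
From Coquelicot Require Import Coquelicot.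

(* Eulerian numbers <n, k> via the standard recurrence
   <0,0> = 1, <0,k> = 0 (k >= 1),
   <n+1,k> = (k+1)<n,k> + (n+1-k)<n,k-1>   (second term absent for k = 0). *)
Fixpoint eulerian (n k : nat) : nat :=
  match n with
  | O => match k with O => 1 | S _ => 0 end
  | S m => (k + 1) * eulerian m k
           + match k with O => 0 | S j => (m - j) * eulerian m j end
  end.

Definition eul_term (k n : nat) : R := INR (eulerian n k) / INR (fact n).

(** Put H(n,k) := sum_(j<k) (-1)^j C(n,j) (k-j)^n, so that <n,k> = H(n,k+1) - H(n,k).
    Since sum_n C(n,j) m^n / n! = m^j e^m / j!, the k-th series equals
    W(k+1) - W(k) with W(k) := sum_(j<k) (-1)^j (k-j)^j e^(k-j) / j!.

    By the binomial theorem, w_k := W(k+1) satisfies g * w = e delta_0 (Cauchy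
    product), where g_i = 1/i! - e [i = 1] are the Taylor coefficients of
    e^x - e x. This function has a double zero at x = 1, so its quotient by
    (1 - x)^2 has coefficients Q (the double partial sums of g) with Q_0 = 1,
    0 <= Q_i <= 1/(i+1)! and sum Q = e/2. Moving the factor (1 - x)^2 onto w
    gives Q * D = e delta_0 for the second differences D of w. As Q_0 = 1 this
    is a recursion for D, which yields |D_k| <= e (9/10)^k. Hence D is absolutely
    summable, the Cauchy product gives (e/2) sum D = e, and the k-th series,
    the partial sum D_0 + ... + D_k, tends to 2. *)

From Stdlib Require Import Reals Arith Lia Lra.
From Coquelicot Require Import Coquelicot.
From HB Require Import structures.
From mathcomp Require Import all_boot.

Local Open Scope R_scope.
Arguments INR : simpl never.

HB.instance Definition _ := Monoid.isComLaw.Build R 0 Rplus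
  (fun x y z => esym (Rplus_assoc x y z)) Rplus_comm Rplus_0_l.
HB.instance Definition _ := Monoid.isComLaw.Build R 1 Rmult
  (fun x y z => esym (Rmult_assoc x y z)) Rmult_comm Rmult_1_l.
HB.instance Definition _ := Monoid.isMulLaw.Build R 0 Rmult Rmult_0_l Rmult_0_r.
HB.instance Definition _ := Monoid.isAddLaw.Build R Rmult Rplus
  Rmult_plus_distr_r Rmult_plus_distr_l.

Notation "\rsum_ ( i < n ) F" := (\big[Rplus/0]_(i < n) F)
  (at level 41, F at level 41, i, n at level 50).

Lemma rsumB n (F G : 'I_n -> R) :
  \rsum_(i < n) (F i - G i) = \rsum_(i < n) F i - \rsum_(i < n) G i.
Proof. by rewrite /Rminus big_split /= (big_morph Ropp Ropp_plus_distr Ropp_0). Qed.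

Lemma ler_rsum n (F G : 'I_n -> R) :
  (forall i, F i <= G i) -> \rsum_(i < n) F i <= \rsum_(i < n) G i.
Proof.
move=> leFG; apply: (big_ind2 Rle) => [|*|i _]; [exact: Rle_refl | lra | exact: leFG].
Qed.

Lemma Rabs_rsum_le n (F : 'I_n -> R) :
  Rabs (\rsum_(i < n) F i) <= \rsum_(i < n) Rabs (F i).
Proof.
apply: (big_ind2 (fun x y => Rabs x <= y)) => [|x1 x2 y1 y2 *|i _].
- rewrite Rabs_R0; exact: Rle_refl.
- apply: Rle_trans (Rabs_triang _ _) _; lra.
- exact: Rle_refl.
Qed.

Lemma rsum_geom q k : \rsum_(m < k) q ^ m * (1 - q) = 1 - q ^ k.
Proof.
elim: k => [|k IH]; first by rewrite big_ord0 /=; ring.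
by rewrite big_ord_recr IH /=; ring.
Qed.

Lemma big_antidiagonal (T : Type) (idx : T) (op : Monoid.com_law idx) K
    (F : nat -> nat -> T) :
  \big[op/idx]_(i < K) \big[op/idx]_(j < K - i) F i j =
  \big[op/idx]_(l < K) \big[op/idx]_(j < l.+1) F (l - j)%N j.
Proof.
elim: K => [|K IH]; first by rewrite !big_ord0.
have diagonal : \big[op/idx]_(i < K.+1) F i (K - i)%N =
    \big[op/idx]_(j < K.+1) F (K - j)%N j.
  rewrite (reindex_inj rev_ord_inj); apply: eq_bigr => j _ /=.
  by rewrite subKn // -ltnS.
rewrite [RHS]big_ord_recr -IH -diagonal /=.
rewrite (eq_bigr (fun i : 'I_K.+1 => op (\big[op/idx]_(j < K - i) F i j) (F i (K - i)%N))).
  by rewrite big_split big_ord_recr subnn big_ord0 Monoid.mulm1.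
by move=> i _; rewrite subSn ?big_ord_recr // -ltnS.
Qed.

Lemma sum_f_R0_rsum (a : nat -> R) n : sum_f_R0 a n = \rsum_(i < n.+1) a i.
Proof.
elim: n => [|n IH] /=; first by rewrite big_ord_recr big_ord0 /= Rplus_0_l.
by rewrite IH [RHS]big_ord_recr.
Qed.

Lemma sum_nS (a : nat -> R) n : sum_n a n.+1 = sum_n a n + a n.+1 :> R.
Proof. exact: sum_Sn. Qed.

Lemma sum_n_rsum (a : nat -> R) n : sum_n a n = \rsum_(i < n.+1) a i :> R.
Proof. by rewrite sum_n_Reals sum_f_R0_rsum. Qed.

Lemma INR_factS n : INR (fact n.+1) = INR n.+1 * INR (fact n).
Proof. exact: mult_INR. Qed.

Lemma INR_bin_fact n m :
  INR 'C(m + n, m) * (INR (fact m) * INR (fact n)) = INR (fact (m + n)).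
Proof.
have fact_nat k : fact k = k`! by elim: k => //= k ->; rewrite factS.
by rewrite -!mult_INR !fact_nat -(bin_fact (leq_addr n m)) addKn.
Qed.

Lemma fact_ge_pow n p : INR (fact n) * INR n.+1 ^ p.+1 <= INR (fact (n.+1 + p)).
Proof.
elim: p => [|p IH]; first by rewrite addn0 INR_factS pow_1 Rmult_comm; exact: Rle_refl.
rewrite addnS INR_factS -tech_pow_Rmult.
have le_n : INR n.+1 <= INR (n.+1 + p).+1 by apply: le_INR; rewrite -plusE; lia.
rewrite Rmult_comm Rmult_assoc (Rmult_comm _ (INR (fact n))).
apply: Rmult_le_compat (pos_INR _) _ le_n IH.
exact/Rmult_le_pos/pow_le/pos_INR/pos_INR.
Qed.

Lemma fact_ge_2pow3 m : 2 * 3 ^ m <= INR (fact m.+2).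
Proof.
elim: m => [|m IH]; first by rewrite !INR_factS /= S_INR INR_1; lra.
rewrite INR_factS -tech_pow_Rmult !S_INR.
have := pos_INR m; have := pow_le 3 m ltac:(lra).
nra.
Qed.

Lemma pow_rescale x k i :
  x <> 0 -> (i <= k)%N -> x ^ (k - i) = x ^ k.+1 * (/ x) ^ i.+1.
Proof.
move=> x_neq0 le_ik.
have -> : k.+1 = (k - i + i.+1)%N by rewrite addnS subnK.
by rewrite pow_add pow_inv Rmult_assoc Rinv_r ?Rmult_1_r //; apply: pow_nonzero.
Qed.

Lemma rsum_binomial_fact a l :
  \rsum_(j < l.+1) ((-1) ^ j * a ^ j / (INR (fact j) * INR (fact (l - j)))) =
  (1 - a) ^ l / INR (fact l).
Proof.
have fact_l := INR_fact_neq_0 l.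
apply: (Rmult_eq_reg_l (INR (fact l))) => //.
have -> : INR (fact l) * ((1 - a) ^ l / INR (fact l)) = (- a + 1) ^ l.
  by rewrite /Rminus Rplus_comm; field.
rewrite big_distrr Binomial.binomial sum_f_R0_rsum; apply: eq_bigr => j _.
have := INR_fact_neq_0 j; have := INR_fact_neq_0 (l - j).
rewrite pow1 /Binomial.C -minusE (_ : - a = -1 * a) ?Rpow_mult_distr => *; last ring.
by rewrite /=; field.
Qed.

Lemma rsum_pow_inv_fact_le1 k :
  \rsum_(m < k) ((10/9) ^ m.+1 / INR (fact m.+2)) <= 1.
Proof.
have term_le m : (10/9) ^ m.+1 / INR (fact m.+2) <=
    15/17 * ((10/27) ^ m * (1 - 10/27)).
  have fact_ge := fact_ge_2pow3 m.
  have pow3_pos : 0 < 3 ^ m by apply: pow_lt; lra.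
  have pow_pos : 0 < (10/9) ^ m by apply: pow_lt; lra.
  have -> : (10/27) ^ m = (10/9) ^ m / 3 ^ m.
    by rewrite /Rdiv -pow_inv -Rpow_mult_distr; congr (_ ^ _); field.
  rewrite -tech_pow_Rmult.
  apply: Rle_trans (_ : 10/9 * (10/9) ^ m / (2 * 3 ^ m) <= _).
    apply: Rmult_le_compat_l; first lra.
    by apply: Rinv_le_contravar; lra.
  by apply: Req_le; field; lra.
apply: Rle_trans (ler_rsum _ _ _ (fun m => term_le m)) _.
rewrite -big_distrr rsum_geom.
have := pow_le (10/27) k ltac:(lra).
rewrite /=; lra.
Qed.

Lemma is_seriesE (a : nat -> R) (l : R) :
  is_series a l <-> is_lim_seq (sum_n a) l.
Proof. by split=> sum_lim; exact sum_lim. Qed.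

Lemma is_series_exp x : is_series (fun n => x ^ n / INR (fact n)) (exp x).
Proof.
apply: is_series_ext (is_exp_Reals x) => n.
by rewrite pow_n_pow /scal /= /mult /= /Rdiv Rmult_comm.
Qed.

Lemma is_series_0 : is_series (fun _ => 0) 0.
Proof.
have := is_series_scal_r 0 _ _ (is_series_exp 0).
by rewrite Rmult_0_r; apply: is_series_ext => n; rewrite Rmult_0_r.
Qed.

Lemma is_series_le (a b : nat -> R) la lb :
  (forall n, a n <= b n) -> is_series a la -> is_series b lb -> la <= lb.
Proof.
move=> le_ab sa sb; apply: (is_lim_seq_le (sum_n a) (sum_n b) la lb _ sa sb) => n.
rewrite !sum_n_rsum; exact: ler_rsum.
Qed.

Lemma is_series_rsum K (f : nat -> nat -> R) (l : nat -> R) :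
  (forall j, is_series (f j) (l j)) ->
  is_series (fun n => \rsum_(j < K) f j n) (\rsum_(j < K) l j).
Proof.
move=> fl; elim: K => [|K IH].
- rewrite big_ord0; apply: is_series_ext is_series_0 => n.
  by rewrite big_ord0.
- rewrite big_ord_recr; apply: is_series_ext (is_series_plus _ _ _ _ IH (fl K)) => n.
  by rewrite big_ord_recr.
Qed.

Lemma is_series_vanishing_prefix (a : nat -> R) j l :
  (forall n, (n < j)%N -> a n = 0) -> is_series (fun p => a (j + p)%N) l ->
  is_series a l.
Proof.
elim: j a => [|j IH] a a_small a_shift; first exact: is_series_ext a_shift.
apply: IH => [n lt_nj|]; first by apply: a_small; exact: ltnW.
apply: is_series_decr_1.
rewrite addn0 a_small // opp_zero plus_zero_r.
by apply: is_series_ext a_shift => n; rewrite addSnnS.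
Qed.

Lemma is_series_binomial_exp j x :
  is_series (fun n => INR 'C(n, j) * x ^ n / INR (fact n))
            (x ^ j * exp x / INR (fact j)).
Proof.
apply: (is_series_vanishing_prefix _ j) => [n lt_nj|].
  by rewrite bin_small // INR_0 /Rdiv !Rmult_0_l.
rewrite (_ : x ^ j * exp x / INR (fact j) = x ^ j / INR (fact j) * exp x);
  last by rewrite /Rdiv; ring.
apply: is_series_ext (is_series_scal_l _ _ _ (is_series_exp x)) => p.
rewrite /scal /= /mult /= -(INR_bin_fact p j).
have : INR 'C(j + p, j) <> 0 by apply/not_0_INR/eqP; rewrite -lt0n bin_gt0 leq_addr.
have := INR_fact_neq_0 j; have := INR_fact_neq_0 p.
rewrite pow_add => *; field; auto.
Qed.

Lemma is_series_inv_fact : is_series (fun l => / INR (fact l)) (exp 1).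
Proof.
by apply: is_series_ext (is_series_exp 1) => n; rewrite pow1 /Rdiv Rmult_1_l.
Qed.

Lemma is_series_id_inv_fact : is_series (fun i => INR i / INR (fact i)) (exp 1).
Proof.
apply: is_series_decr_1.
rewrite INR_0 /Rdiv Rmult_0_l opp_zero plus_zero_r.
apply: is_series_ext is_series_inv_fact => n /=.
have := INR_fact_neq_0 n; have : INR n.+1 <> 0 by exact: not_0_INR.
by rewrite INR_factS => *; field.
Qed.

Lemma is_series_delta0 c : is_series (fun n => if n is 0 then c else 0) c.
Proof.
apply: is_series_decr_1.
by rewrite /plus /opp /= Rplus_opp_r; exact: is_series_0.
Qed.

Lemma exp_INR n : exp (INR n) = exp 1 ^ n.
Proof.
elim: n => [|n IH]; first by rewrite INR_0 exp_0.
by rewrite S_INR exp_plus IH /=; ring.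
Qed.

(** * Convolution and differences *)

Definition conv (a b : nat -> R) (k : nat) : R :=
  \rsum_(i < k.+1) (a i * b (k - i)%N).

Definition diff (b : nat -> R) (k : nat) : R :=
  b k - (if k is k'.+1 then b k' else 0).

Lemma sum_n_diff b k : sum_n (diff b) k = b k :> R.
Proof.
elim: k => [|k IH]; first by rewrite sum_O /diff Rminus_0_r.
by rewrite sum_nS IH /diff; ring.
Qed.

Lemma diff_sum_n a k : diff (sum_n a) k = a k.
Proof.
case: k => [|k]; first by rewrite /diff sum_O Rminus_0_r.
by rewrite /diff sum_nS; ring.
Qed.

Lemma is_series_diff (a : nat -> R) (l : R) : is_lim_seq a l -> is_series (diff a) l.
Proof. by move=> a_l; apply/is_seriesE; apply: is_lim_seq_ext a_l => n; rewrite sum_n_diff. Qed.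

Lemma conv_diffr a b k : conv a (diff b) k = diff (conv a b) k.
Proof.
rewrite /conv /diff.
under eq_bigr do rewrite Rmult_minus_distr_l.
rewrite rsumB [X in _ - X]big_ord_recr /= subnn Rmult_0_r Rplus_0_r.
case: k => [|k]; first by rewrite big_ord0.
congr (_ - _); apply: eq_bigr => i _.
by rewrite subSn // -ltnS.
Qed.

Lemma conv_sum_nl a b k : conv (sum_n a) b k = sum_n (conv a b) k :> R.
Proof.
elim: k => [|k IH].
  by rewrite sum_O /conv !big_ord_recl !big_ord0 sum_O.
rewrite sum_nS -IH /conv big_ord_recl [\rsum_(i < k.+2) _]big_ord_recl.
rewrite [sum_n a 0]sum_O (Rplus_comm (\rsum_(i < k.+1) _)) Rplus_assoc; congr (_ + _).
rewrite -big_split; apply: eq_bigr => i _ /=.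
by rewrite /bump add1n subSS sum_nS; ring.
Qed.

Lemma conv_sum_n_diff a b k : conv (sum_n a) (diff b) k = conv a b k.
Proof.
rewrite conv_diffr -(diff_sum_n (conv a b) k).
by case: k => [|k]; rewrite /diff !conv_sum_nl.
Qed.

(** * An explicit formula for the Eulerian numbers *)

Definition alt_power_sum (n k : nat) : R :=
  \rsum_(j < k) ((-1) ^ j * INR 'C(n, j) * INR (k - j) ^ n).

Lemma alt_power_sum0 n : alt_power_sum n 0 = 0.
Proof. by rewrite /alt_power_sum big_ord0. Qed.

Lemma alt_power_sum_0S k : alt_power_sum 0 k.+1 = 1.
Proof.
rewrite /alt_power_sum big_ord_recl big1 => [|i _].
- rewrite /= bin0 INR_1 Rplus_0_r; ring.
- by rewrite bin_small // Rmult_0_r Rmult_0_l.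
Qed.

Lemma alt_power_sum_pascal n k :
  \rsum_(j < k.+1) ((-1) ^ j * INR 'C(n.+1, j) * INR (k.+1 - j) ^ n) =
  alt_power_sum n k.+1 - alt_power_sum n k.
Proof.
rewrite /alt_power_sum !big_ord_recl !bin0.
have -> : \rsum_(i < k) ((-1) ^ bump 0 i * INR 'C(n.+1, bump 0 i) * INR (k.+1 - bump 0 i) ^ n) =
    \rsum_(i < k) ((-1) ^ bump 0 i * INR 'C(n, bump 0 i) * INR (k.+1 - bump 0 i) ^ n) -
    \rsum_(i < k) ((-1) ^ i * INR 'C(n, i) * INR (k - i) ^ n).
  rewrite -rsumB; apply: eq_bigr => i _.
  rewrite /bump add1n binS plus_INR subSS /=; ring.
rewrite /= subn0; ring.
Qed.

Lemma alt_power_sum_rec n k :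
  alt_power_sum n.+1 k.+1 =
  INR k.+1 * alt_power_sum n k.+1 + (INR n - INR k) * alt_power_sum n k.
Proof.
have split_power : alt_power_sum n.+1 k.+1 =
    INR k.+1 * (\rsum_(j < k.+1) ((-1) ^ j * INR 'C(n.+1, j) * INR (k.+1 - j) ^ n)) -
    \rsum_(j < k.+1) ((-1) ^ j * INR (j * 'C(n.+1, j)) * INR (k.+1 - j) ^ n).
  rewrite big_distrr -rsumB; apply: eq_bigr => j _ /=.
  rewrite minus_INR; last exact/leP/ltnW/ltn_ord.
  rewrite mult_INR /=; ring.
have shift : \rsum_(j < k.+1) ((-1) ^ j * INR (j * 'C(n.+1, j)) * INR (k.+1 - j) ^ n) =
    - INR n.+1 * alt_power_sum n k.
  rewrite big_ord_recl mul0n Rmult_0_r Rmult_0_l Rplus_0_l big_distrr.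
  apply: eq_bigr => i _.
  rewrite /= /bump add1n subSS -mul_bin_diag mult_INR /= add0n; ring.
rewrite split_power alt_power_sum_pascal shift !S_INR; ring.
Qed.

Lemma eulerian_gt n k : (n < k)%N -> eulerian n k = 0%N.
Proof.
elim: n k => [|n IH] [|k] //= lt_nk.
rewrite !IH //; [lia | exact: ltnW].
Qed.

Lemma eulerian_alt_power_sum n k :
  INR (eulerian n k) = alt_power_sum n k.+1 - alt_power_sum n k.
Proof.
elim: n k => [|n IH] [|k].
- by rewrite alt_power_sum_0S alt_power_sum0 Rminus_0_r.
- by rewrite !alt_power_sum_0S Rminus_diag.
- rewrite [eulerian _ _]/= !Nat.add_0_r IH.
  rewrite alt_power_sum_rec !alt_power_sum0 INR_0 INR_1; ring.
- have -> : eulerian n.+1 k.+1 = (k.+2 * eulerian n k.+1 + (n - k) * eulerian n k)%coq_nat.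
    by rewrite /= Nat.add_1_r.
  rewrite plus_INR !mult_INR !IH !alt_power_sum_rec !S_INR.
  case: (leqP k n) => [le_kn | lt_nk].
  + rewrite minus_INR; [ring | exact/leP].
  + have -> : (n - k = 0)%N by apply/eqP; rewrite subn_eq0 ltnW.
    have -> : alt_power_sum n k = alt_power_sum n k.+1.
      by apply/esym/Rminus_diag_uniq; rewrite -IH eulerian_gt.
    rewrite INR_0; ring.
Qed.

(** * The series as first differences *)

Definition exp_alt_sum (k : nat) : R :=
  \rsum_(j < k) ((-1) ^ j * INR (k - j) ^ j * exp 1 ^ (k - j) / INR (fact j)).

Lemma exp_alt_sum0 : exp_alt_sum 0 = 0.
Proof. by rewrite /exp_alt_sum big_ord0. Qed.

Lemma is_series_alt_power_sum k :
  is_series (fun n => alt_power_sum n k / INR (fact n)) (exp_alt_sum k).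
Proof.
have -> : exp_alt_sum k = \rsum_(j < k)
    ((-1) ^ j * (INR (k - j) ^ j * exp (INR (k - j)) / INR (fact j))).
  by apply: eq_bigr => j _; rewrite exp_INR /Rdiv; ring.
apply: is_series_ext (is_series_rsum k _ _ (fun j =>
  is_series_scal_l ((-1) ^ j) _ _ (is_series_binomial_exp j (INR (k - j))))) => n.
rewrite /alt_power_sum /Rdiv big_distrl; apply: eq_bigr => j _ /=.
rewrite /scal /= /mult /=; ring.
Qed.

Definition eul_sum : nat -> R := diff (fun k => exp_alt_sum k.+1).

Lemma eul_sumE k : eul_sum k = exp_alt_sum k.+1 - exp_alt_sum k.
Proof. by case: k => [|k]; rewrite /eul_sum /diff // exp_alt_sum0. Qed.

Lemma is_series_eul_term k : is_series (eul_term k) (eul_sum k).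
Proof.
rewrite eul_sumE.
apply: is_series_ext (is_series_minus _ _ _ _ (is_series_alt_power_sum k.+1)
  (is_series_alt_power_sum k)) => n.
rewrite /eul_term eulerian_alt_power_sum /plus /opp /= /Rdiv; ring.
Qed.

(* With u = x e^(1-x) one has sum_k W(k) x^k = u/(1-u), and the identity reads
   e^x sum_k W(k+1) x^k = e/(1-u). *)
Lemma exp_alt_sum_conv k :
  \rsum_(i < k.+1) (exp_alt_sum (k.+1 - i) / INR (fact i)) =
  exp 1 * exp_alt_sum k + (if k is 0 then exp 1 else 0).
Proof.
pose F i j := (-1) ^ j * INR (k.+1 - i - j) ^ j * exp 1 ^ (k.+1 - i - j) /
  (INR (fact j) * INR (fact i)).
have double_sum : \rsum_(i < k.+1) (exp_alt_sum (k.+1 - i) / INR (fact i)) =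
    \rsum_(i < k.+1) \rsum_(j < k.+1 - i) F i j.
  apply: eq_bigr => i _; rewrite /exp_alt_sum /Rdiv big_distrl; apply: eq_bigr => j _.
  have := INR_fact_neq_0 j; have := INR_fact_neq_0 i.
  by rewrite /F /= => *; field.
have antidiagonal (l : 'I_k.+1) : \rsum_(j < l.+1) F (l - j)%N j =
    exp 1 ^ (k.+1 - l) * ((1 - INR (k.+1 - l)) ^ l / INR (fact l)).
  rewrite -rsum_binomial_fact big_distrr; apply: eq_bigr => j _.
  have le_jl : (j <= l)%N by rewrite -ltnS.
  have := INR_fact_neq_0 j; have := INR_fact_neq_0 (l - j).
  by rewrite /F /= -subnDA subnK // => *; field.
rewrite double_sum big_antidiagonal (eq_bigr _ (fun l _ => antidiagonal l)).
rewrite big_ord_recr /= subSnn INR_1 Rminus_diag.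
congr (_ + _).
- rewrite /exp_alt_sum big_distrr; apply: eq_bigr => l _ /=.
  rewrite subSn ?S_INR; last exact: ltnW.
  rewrite (_ : 1 - (INR (k - l) + 1) = -1 * INR (k - l)); last ring.
  have := INR_fact_neq_0 l.
  by rewrite Rpow_mult_distr /= => *; field.
- case: k {double_sum antidiagonal F} => [|k] /=; first by rewrite INR_1; field.
  by rewrite /Rdiv !Rmult_0_l Rmult_0_r.
Qed.

Definition exp_lin_coef (i : nat) : R :=
  / INR (fact i) - (if i == 1%N then exp 1 else 0).

Lemma conv_exp_lin_coef k :
  conv exp_lin_coef (fun m => exp_alt_sum m.+1) k = if k is 0 then exp 1 else 0.
Proof.
have -> : conv exp_lin_coef (fun m => exp_alt_sum m.+1) k =
    \rsum_(i < k.+1) (exp_alt_sum (k.+1 - i) / INR (fact i)) -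
    \rsum_(i < k.+1) ((if i == 1%N :> nat then exp 1 else 0) * exp_alt_sum (k - i).+1).
  rewrite -rsumB; apply: eq_bigr => i _.
  rewrite /exp_lin_coef subSn /Rdiv; [ring | by rewrite -ltnS].
rewrite exp_alt_sum_conv; case: k => [|k].
- by rewrite big_ord_recl big_ord0 /= exp_alt_sum0; ring.
- rewrite 2!big_ord_recl big1 => [|i _] /=; last by rewrite Rmult_0_l.
  rewrite subn1 /=; ring.
Qed.

(** * The quotient by (1 - x)^2 *)

Definition exp1_tail (n : nat) : R := exp 1 - sum_n (fun l => / INR (fact l)) n.

Lemma exp1_tailS n : exp1_tail n.+1 = exp1_tail n - / INR (fact n.+1).
Proof. by rewrite /exp1_tail sum_nS; ring. Qed.

Lemma is_series_exp1_tail n :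
  is_series (fun p => / INR (fact (n.+1 + p))) (exp1_tail n).
Proof.
apply: (is_series_incr_n (fun l => / INR (fact l))); first exact/ltP.
by rewrite /exp1_tail /plus /= Rplus_comm Rplus_minus; exact: is_series_inv_fact.
Qed.

Lemma exp1_tail_ge0 n : 0 <= exp1_tail n.
Proof.
apply: (is_series_le _ _ _ _ _ is_series_0 (is_series_exp1_tail n)) => p.
exact/Rlt_le/Rinv_0_lt_compat/INR_fact_lt_0.
Qed.

Lemma exp1_tail_le n : (0 < n)%N -> exp1_tail n <= / (INR (fact n) * INR n).
Proof.
move=> /ltP/lt_0_INR n_pos.
have fact_pos := INR_fact_lt_0 n.
set q := / INR n.+1.
have q_pos : 0 < q by apply/Rinv_0_lt_compat/lt_0_INR/ltP.
have q_lt1 : q < 1.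
  by rewrite /q -Rinv_1; apply: Rinv_lt_contravar; rewrite S_INR; lra.
have geom : is_series (fun p => / INR (fact n) * q * q ^ p) (/ INR (fact n) * q / (1 - q)).
  apply: (is_series_scal_l (/ INR (fact n) * q)); apply: is_series_geom.
  by rewrite Rabs_pos_eq; lra.
apply: Rle_trans (is_series_le _ _ _ _ _ (is_series_exp1_tail n) geom) _.
- move=> p; rewrite Rmult_assoc tech_pow_Rmult /q pow_inv -Rinv_mult.
  apply: Rinv_le_contravar (fact_ge_pow n p).
  by apply: Rmult_lt_0_compat => //; apply/pow_lt/lt_0_INR/ltP.
- by apply: Req_le; rewrite /q S_INR; field; lra.
Qed.

(* Taylor coefficients of (e^x - e x) / (1 - x)^2. *)
Definition quot_coef (k : nat) : R := sum_n (sum_n exp_lin_coef) k.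

Lemma sum_n_exp_lin_coef k :
  sum_n exp_lin_coef k = exp 1 - exp1_tail k - (if k is 0 then 0 else exp 1) :> R.
Proof.
elim: k => [|k IH].
  by rewrite sum_O /exp1_tail sum_O /exp_lin_coef /=; ring.
rewrite sum_nS IH exp1_tailS /exp_lin_coef.
by case: k {IH} => [|k] /=; ring.
Qed.

Lemma quot_coefE k : quot_coef k = / INR (fact k.+1) - INR k * exp1_tail k.+1.
Proof.
rewrite /quot_coef; elim: k => [|k IH].
  by rewrite !sum_O /exp_lin_coef /= INR_0 INR_1; field.
rewrite sum_nS IH sum_n_exp_lin_coef (exp1_tailS k.+1).
have := INR_fact_neq_0 k; have := pos_INR k.
rewrite !INR_factS !S_INR => *; field; repeat split; lra.
Qed.

Lemma quot_coef0 : quot_coef 0 = 1.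
Proof. by rewrite quot_coefE INR_0 INR_1; field. Qed.

Lemma quot_coef_bounds k : 0 <= quot_coef k <= / INR (fact k.+1).
Proof.
rewrite quot_coefE.
have k_ge0 := pos_INR k.
have tail_ge0 := exp1_tail_ge0 k.+1.
have tail_le := exp1_tail_le k.+1 (ltn0Sn k).
have inv_fact_pos := Rinv_0_lt_compat _ (INR_fact_lt_0 k.+1).
have : INR k * exp1_tail k.+1 <= / INR (fact k.+1).
  apply: Rle_trans (Rmult_le_compat_l _ _ _ k_ge0 tail_le) _.
  have -> : INR k * / (INR (fact k.+1) * INR k.+1) =
      / INR (fact k.+1) * (INR k / (INR k + 1)).
    by rewrite S_INR; field; split; [lra | exact: INR_fact_neq_0].
  rewrite -{2}(Rmult_1_r (/ INR (fact k.+1))); apply: Rmult_le_compat_l; first lra.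
  by apply/Rle_div_l; lra.
have : 0 <= INR k * exp1_tail k.+1 by apply: Rmult_le_pos.
lra.
Qed.

Lemma is_series_quot_coef : is_series quot_coef (exp 1 / 2).
Proof.
pose a i := INR i * INR i.+1 / 2 * exp1_tail i.+1.
have a_bounds i : 0 <= a i <= / INR (fact i).
  have i_ge0 := pos_INR i; have i1_pos : 0 < INR i.+1 by apply/lt_0_INR/ltP.
  have fact_pos := INR_fact_lt_0 i.
  have coef_ge0 : 0 <= INR i * INR i.+1 / 2 by apply: Rmult_le_pos; [nra | lra].
  split; first exact: Rmult_le_pos coef_ge0 (exp1_tail_ge0 _).
  apply: Rle_trans (Rmult_le_compat_l _ _ _ coef_ge0 (exp1_tail_le i.+1 (ltn0Sn i))) _.
  have -> : INR i * INR i.+1 / 2 * / (INR (fact i.+1) * INR i.+1) =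
      / INR (fact i) * (INR i / (2 * INR i.+1)) by rewrite INR_factS; field; lra.
  rewrite -{2}(Rmult_1_r (/ INR (fact i))); apply: Rmult_le_compat_l.
    exact/Rlt_le/Rinv_0_lt_compat.
  by apply: (proj1 (Rdiv_le_1 _ _ _)); rewrite S_INR; lra.
have a_lim : is_lim_seq a 0.
  apply: (is_lim_seq_le_le (fun _ => 0) a (fun i => / INR (fact i))) => //.
    exact: is_lim_seq_const.
  by apply: ex_series_lim_0; exists (exp 1); exact: is_series_inv_fact.
have decomposition i :
    quot_coef i = / INR (fact i) - / 2 * (INR i / INR (fact i)) - diff a i.
  rewrite quot_coefE /diff /a; case: i => [|i].
    by rewrite INR_0 INR_1; field.
  rewrite (exp1_tailS i.+1) !INR_factS !S_INR.
  have := INR_fact_neq_0 i; have := pos_INR i => *.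
  field; repeat split; lra.
have := is_series_minus _ _ _ _ (is_series_minus _ _ _ _ is_series_inv_fact
  (is_series_scal_l (/ 2) _ _ is_series_id_inv_fact)) (is_series_diff _ _ a_lim).
rewrite (_ : plus _ _ = exp 1 / 2); last by rewrite /plus /opp /scal /= /mult /=; field.
by apply: is_series_ext => i; rewrite decomposition.
Qed.

Lemma conv_quot_coef_diff k :
  conv quot_coef (diff eul_sum) k = if k is 0 then exp 1 else 0.
Proof. by rewrite conv_sum_n_diff conv_sum_n_diff conv_exp_lin_coef. Qed.

(** * Convergence *)

Lemma diff_eul_sum_bound k : Rabs (diff eul_sum k) <= exp 1 * (9/10) ^ k.
Proof.
have e_pos := exp_pos 1.
elim/ltn_ind: k => k IH.
have := conv_quot_coef_diff k.
rewrite /conv big_ord_recl quot_coef0 subn0 Rmult_1_l.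
case: k IH => [|k] IH conv_eq.
  by rewrite big_ord0 Rplus_0_r in conv_eq; rewrite conv_eq Rmult_1_r Rabs_pos_eq; lra.
have -> : diff eul_sum k.+1 =
    - \rsum_(i < k.+1) (quot_coef i.+1 * diff eul_sum (k - i)%N).
  move: conv_eq => /=.
  under eq_bigr do rewrite /bump add1n subSS.
  move=> conv_eq; lra.
rewrite Rabs_Ropp; apply: Rle_trans (Rabs_rsum_le _ _) _.
have term_le (i : 'I_k.+1) : Rabs (quot_coef i.+1 * diff eul_sum (k - i)%N) <=
    exp 1 * (9/10) ^ k.+1 * ((10/9) ^ i.+1 / INR (fact i.+2)).
  have -> : exp 1 * (9/10) ^ k.+1 * ((10/9) ^ i.+1 / INR (fact i.+2)) =
      / INR (fact i.+2) * (exp 1 * (9/10) ^ (k - i)).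
    rewrite (pow_rescale (9/10) k i) ?Rinv_div /Rdiv; [ring | lra | by rewrite -ltnS].
  rewrite Rabs_mult; have [Q_ge0 Q_le] := quot_coef_bounds i.+1.
  apply: Rmult_le_compat; try exact: Rabs_pos; first by rewrite Rabs_pos_eq.
  by apply: IH; rewrite ltnS leq_subr.
apply: Rle_trans (ler_rsum _ _ _ term_le) _.
rewrite -big_distrr -{2}(Rmult_1_r (exp 1 * _)).
apply: Rmult_le_compat_l; last exact: rsum_pow_inv_fact_le1.
by apply/Rlt_le/Rmult_lt_0_compat => //; apply: pow_lt; lra.
Qed.

Lemma ex_series_abs_diff_eul_sum : ex_series (fun k => Rabs (diff eul_sum k)).
Proof.
apply: (ex_series_le _ (fun k => scal (exp 1) ((9/10) ^ k))).
  by move=> k; rewrite /norm /= /abs /= Rabs_Rabsolu; exact: diff_eul_sum_bound.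
by apply/ex_series_scal_l/ex_series_geom; rewrite Rabs_pos_eq; lra.
Qed.

Lemma ex_series_abs_quot_coef : ex_series (fun k => Rabs (quot_coef k)).
Proof.
apply: (ex_series_le _ (fun k => / INR (fact k.+1))).
  move=> k; rewrite /norm /= /abs /= Rabs_Rabsolu.
  by have [Q_ge0 Q_le] := quot_coef_bounds k; rewrite Rabs_pos_eq.
by exists (exp1_tail 0); exact: is_series_exp1_tail.
Qed.

Lemma is_series_diff_eul_sum : is_series (diff eul_sum) 2.
Proof.
have [l sum_l] := ex_series_Rabs _ ex_series_abs_diff_eul_sum.
have cauchy_prod : is_series (fun n => if n is 0 then exp 1 else 0) (exp 1 / 2 * l).
  apply: is_series_ext (is_series_mult _ _ _ _ is_series_quot_coef sum_l
    ex_series_abs_quot_coef ex_series_abs_diff_eul_sum) => n.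
  by rewrite sum_f_R0_rsum -conv_quot_coef_diff.
have := is_series_unique _ _ cauchy_prod.
rewrite (is_series_unique _ _ (is_series_delta0 (exp 1))) => e_eq.
suff <- : l = 2 by [].
apply: (Rmult_eq_reg_l (exp 1 / 2)); last by have := exp_pos 1; lra.
by rewrite -e_eq; field.
Qed.

Theorem mainTheorem4 :
  (forall k : nat, ex_series (eul_term k)) /\
  is_lim_seq (fun k : nat => Series (eul_term k)) 2.
Proof.
split => [k|]; first by exists (eul_sum k); exact: is_series_eul_term.
apply: is_lim_seq_ext (proj1 (is_seriesE _ _) is_series_diff_eul_sum) => k.
by rewrite sum_n_diff (is_series_unique _ _ (is_series_eul_term k)).
Qed.
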